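(* Let $F$ be a field. Every Hurwitz $F$-algebra whose norm is anisotropic is reversible. A split Hurwitz $F$-algebra (i.e. one whose norm is isotropic) is reversible if and only if its dimension is at most $2$.
   Context: An $F$-algebra is a vector space with a bilinear (not necessarily associative) multiplication; all algebras are unital. For a quadratic form $q:V\to F$, let $\langle x,y\rangle=q(x+y)-q(x)-q(y)$ and $V^\perp=\{x\in V:\langle x,V\rangle=0\}$; $q$ is non-degenerate if either $V^\perp=0$, or $\dim V^\perp=1$ and $q(V^\perp)\neq 0$. $q$ is anisotropic if $q(x)\ne 0$ for all nonzero $x$, isotropic otherwise. A Hurwitz algebra is a unital $F$-algebra $A$ with a non-degenerate quadratic form $n:A\to F$ (its norm) satisfying $n(ab)=n(a)n(b)$ for all $a,b\in A$; it is split if $n$ is isotropic. An algebra $A$ is reversible if $ab=0$ implies $ba=0$ for all $a,b\in A$. *)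

From HB Require Import structures.
From mathcomp Require Import all_boot all_order all_algebra.
Set Implicit Arguments. Unset Strict Implicit. Unset Printing Implicit Defensive.
Import GRing.Theory.
Local Open Scope ring_scope.

(* A (not necessarily associative) F-algebra structure on an F-vector space V
   is given by a bilinear multiplication [m : V -> V -> V]. *)
Definition bilinear_mul (F : fieldType) (V : lmodType F) (m : V -> V -> V) : Prop :=
  (forall (a : F) (x y z : V), m (a *: x + y) z = a *: m x z + m y z) /\
  (forall (a : F) (x y z : V), m z (a *: x + y) = a *: m z x + m z y).

Definition is_unit_elt (F : fieldType) (V : lmodType F) (m : V -> V -> V) (e : V) : Prop :=
  forall x : V, m e x = x /\ m x e = x.

Definition polar (F : fieldType) (V : lmodType F) (q : V -> F) (x y : V) : F :=
  q (x + y) - q x - q y.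

(* q is a quadratic form: q(a x) = a^2 q(x) and its polar form is bilinear
   (linearity in the second argument follows from symmetry). *)
Definition quadratic_form (F : fieldType) (V : lmodType F) (q : V -> F) : Prop :=
  (forall (a : F) (x : V), q (a *: x) = a ^+ 2 * q x) /\
  (forall (a : F) (x y z : V), polar q (a *: x + y) z = a * polar q x z + polar q y z).

Definition in_radical (F : fieldType) (V : lmodType F) (q : V -> F) (x : V) : Prop :=
  forall y : V, polar q x y = 0.

Definition nondegenerate (F : fieldType) (V : lmodType F) (q : V -> F) : Prop :=
  (forall x : V, in_radical q x -> x = 0) \/
  ((exists v : V, v != 0 /\ in_radical q v /\
      (forall w : V, in_radical q w -> exists c : F, w = c *: v)) /\
   (exists w : V, in_radical q w /\ q w != 0)).

Definition anisotropic (F : fieldType) (V : lmodType F) (q : V -> F) : Prop :=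
  forall x : V, x != 0 -> q x != 0.

Definition isotropic (F : fieldType) (V : lmodType F) (q : V -> F) : Prop :=
  exists x : V, x != 0 /\ q x = 0.

Definition hurwitz (F : fieldType) (V : lmodType F) (m : V -> V -> V) (e : V)
    (n : V -> F) : Prop :=
  [/\ bilinear_mul m, is_unit_elt m e, quadratic_form n, nondegenerate n
    & forall a b : V, n (m a b) = n a * n b].

Definition reversible (F : fieldType) (V : lmodType F) (m : V -> V -> V) : Prop :=
  forall a b : V, m a b = 0 -> m b a = 0.

Definition dim_le (F : fieldType) (V : lmodType F) (k : nat) : Prop :=
  exists v : 'I_k -> V, forall x : V, exists c : 'I_k -> F, x = \sum_(i < k) c i *: v i.

(* If n is anisotropic, ab = 0 forces n(a) n(b) = 0, hence a = 0 or b = 0.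
   If n is isotropic, nondegeneracy yields f with n(f) = 0 and t(f) = 1, where
   t(x) = <x, e>; then g = e - f has the same properties, conj(f) = g and
   conj(g) = f, so the identity conj(a) (a b) = n(a) b gives f (g b) = 0 and
   g (f b) = 0; the first says f (f b) = f b.  Reversibility turns them into
   b f = (f b) f = f b, and the linearized quadratic identity
   ab + ba = t(a) b + t(b) a - <a, b> e, applied to f with b and with f b,
   shows that e and f span the algebra.
   Conversely, a unital algebra spanned by two vectors is commutative. *)

From Pilot Require Import Defs.
From mathcomp Require Import all_boot all_order all_algebra ring.
From Stdlib Require Import Classical_Pred_Type.
Set Implicit Arguments. Unset Strict Implicit. Unset Printing Implicit Defensive.
Import GRing.Theory.
Local Open Scope ring_scope.

Definition lincomb3 (F : fieldType) (M : lmodType F) (u v w : M) (x y z : F) : M :=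
  x *: u + y *: v + z *: w.

Section LinearCombination.
Variables (F : fieldType) (M : lmodType F) (u v w : M).

Lemma lincomb3D x y z x' y' z' :
  lincomb3 u v w x y z + lincomb3 u v w x' y' z'
  = lincomb3 u v w (x + x') (y + y') (z + z').
Proof. by rewrite /lincomb3 !scalerDl addrACA; congr (_ + _); exact: addrACA. Qed.

Lemma lincomb3N x y z : - lincomb3 u v w x y z = lincomb3 u v w (- x) (- y) (- z).
Proof. by rewrite /lincomb3 !opprD -!scaleNr. Qed.

Lemma lincomb3Z k x y z :
  k *: lincomb3 u v w x y z = lincomb3 u v w (k * x) (k * y) (k * z).
Proof. by rewrite /lincomb3 !scalerDr !scalerA. Qed.

Lemma lincomb3_1 k : k *: u = lincomb3 u v w k 0 0.
Proof. by rewrite /lincomb3 !scale0r !addr0. Qed.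

Lemma lincomb3_2 k : k *: v = lincomb3 u v w 0 k 0.
Proof. by rewrite /lincomb3 !scale0r add0r addr0. Qed.

Lemma lincomb3_3 k : k *: w = lincomb3 u v w 0 0 k.
Proof. by rewrite /lincomb3 !scale0r !add0r. Qed.

End LinearCombination.

(* Compares coefficients in an identity between linear combinations of
   [u], [v], [w]; every occurrence of these vectors must be scaled. *)
Ltac lincomb3_ring u v w :=
  rewrite ?(lincomb3_1 u v w) ?(lincomb3_2 u v w) ?(lincomb3_3 u v w)
          ?(lincomb3Z, lincomb3N, lincomb3D);
  congr lincomb3; ring.

Lemma dim_le2P (F : fieldType) (V : lmodType F) :
  dim_le V 2 <-> exists u v : V, forall x, exists a b : F, x = a *: u + b *: v.
Proof.
split=> [[v hv] | [u [v huv]]].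
  exists (v ord0), (v (lift ord0 ord0)) => x.
  have [c ->] := hv x; rewrite big_ord_recl big_ord1.
  by exists (c ord0), (c (lift ord0 ord0)).
exists (fun i : 'I_2 => if val i == 0%N then u else v) => x.
have [a [b ->]] := huv x.
by exists (fun i : 'I_2 => if val i == 0%N then a else b); rewrite big_ord_recl big_ord1.
Qed.

Section BilinearMul.
Variables (F : fieldType) (V : lmodType F) (m : V -> V -> V).
Hypothesis hm : bilinear_mul m.

Lemma bmulDl x y z : m (x + y) z = m x z + m y z.
Proof. by have := hm.1 1 x y z; rewrite !scale1r. Qed.

Lemma bmulDr x y z : m z (x + y) = m z x + m z y.
Proof. by have := hm.2 1 x y z; rewrite !scale1r. Qed.

Lemma bmul0l z : m 0 z = 0.
Proof. by have := hm.1 (-1) 0 0 z; rewrite scaler0 addr0 scaleN1r addNr. Qed.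

Lemma bmul0r z : m z 0 = 0.
Proof. by have := hm.2 (-1) 0 0 z; rewrite scaler0 addr0 scaleN1r addNr. Qed.

Lemma bmulZl a x z : m (a *: x) z = a *: m x z.
Proof. by have := hm.1 a x 0 z; rewrite !addr0 bmul0l addr0. Qed.

Lemma bmulZr a x z : m z (a *: x) = a *: m z x.
Proof. by have := hm.2 a x 0 z; rewrite !addr0 bmul0r addr0. Qed.

Lemma bmulBl x y z : m (x - y) z = m x z - m y z.
Proof. by rewrite bmulDl -scaleN1r bmulZl scaleN1r. Qed.

Lemma bmulBr x y z : m z (x - y) = m z x - m z y.
Proof. by rewrite bmulDr -scaleN1r bmulZr scaleN1r. Qed.

Lemma commute_lincomb2 z u v a b :
  m z u = m u z -> m z v = m v z -> m z (a *: u + b *: v) = m (a *: u + b *: v) z.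
Proof. by move=> zu zv; rewrite bmulDl bmulDr !bmulZl !bmulZr zu zv. Qed.

Lemma span2_mulC u v :
  m u v = m v u -> (forall x, exists a b, x = a *: u + b *: v) ->
  forall x y, m x y = m y x.
Proof.
move=> uv span x y; have [a [b ->]] := span x.
have commute_span z : m z u = m u z -> m z v = m v z -> m z y = m y z.
  by move=> zu zv; have [c [d ->]] := span y; exact: commute_lincomb2.
apply/esym/commute_lincomb2; apply/esym/commute_span => //; exact/esym.
Qed.

Variable e : V.
Hypothesis he : is_unit_elt m e.

Lemma unit_elt_neq0 (x : V) : x != 0 -> e != 0.
Proof. by apply: contraNneq => e0; rewrite -(he x).1 e0 bmul0l. Qed.

(* Writing e = a u + b v, the relations u e = e u and v e = e v give
   b (u v - v u) = 0 and a (u v - v u) = 0. *)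
Lemma dim_le2_mulC : e != 0 -> dim_le V 2 -> forall x y, m x y = m y x.
Proof.
move=> e0 /dim_le2P[u [v span]]; apply: (span2_mulC _ span).
have [a [b def_e]] := span e.
have comm_e z : m z e = m e z by rewrite (he z).1 (he z).2.
have uv_b : b *: m u v = b *: m v u.
  apply: (addrI (a *: m u u)); move: (comm_e u).
  by rewrite def_e !(bmulDl, bmulDr, bmulZl, bmulZr).
have uv_a : a *: m u v = a *: m v u.
  apply: (addIr (b *: m v v)); move: (esym (comm_e v)).
  by rewrite def_e !(bmulDl, bmulDr, bmulZl, bmulZr).
have [a0 | a_neq0] := eqVneq a 0; last exact: scalerI a_neq0 _ _ uv_a.
have [b0 | b_neq0] := eqVneq b 0; last exact: scalerI b_neq0 _ _ uv_b.
by move: e0; rewrite def_e a0 b0 !scale0r addr0 eqxx.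
Qed.

End BilinearMul.

Section QuadraticForm.
Variables (F : fieldType) (V : lmodType F) (q : V -> F).
Hypothesis hq : quadratic_form q.

Lemma polarC x y : polar q x y = polar q y x.
Proof. by rewrite /polar [y + x]addrC; ring. Qed.

Lemma quadD x y : q (x + y) = q x + q y + polar q x y.
Proof. by rewrite /polar; ring. Qed.

Lemma quadZ a x : q (a *: x) = a ^+ 2 * q x.
Proof. exact: hq.1. Qed.

Lemma quad0 : q 0 = 0.
Proof. by rewrite -(scale0r 0) quadZ expr0n mul0r. Qed.

Lemma quadN x : q (- x) = q x.
Proof. by rewrite -scaleN1r quadZ sqrrN expr1n mul1r. Qed.

Lemma polarDl x y z : polar q (x + y) z = polar q x z + polar q y z.
Proof. by have := hq.2 1 x y z; rewrite scale1r mul1r. Qed.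

Lemma polarDr x y z : polar q z (x + y) = polar q z x + polar q z y.
Proof. by rewrite polarC polarDl !(polarC _ z). Qed.

Lemma polar0l z : polar q 0 z = 0.
Proof. by rewrite /polar add0r quad0 subr0 subrr. Qed.

Lemma polarZl a x z : polar q (a *: x) z = a * polar q x z.
Proof. by have := hq.2 a x 0 z; rewrite addr0 polar0l addr0. Qed.

Lemma polarZr a x z : polar q z (a *: x) = a * polar q z x.
Proof. by rewrite polarC polarZl polarC. Qed.

Lemma polarNl x z : polar q (- x) z = - polar q x z.
Proof. by rewrite -scaleN1r polarZl mulN1r. Qed.

Lemma polarNr x z : polar q z (- x) = - polar q z x.
Proof. by rewrite polarC polarNl polarC. Qed.

Lemma polarxx x : polar q x x = 2 * q x.
Proof. by rewrite /polar -mulr2n -scaler_nat quadZ; ring. Qed.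

Hypothesis hnd : Defs.nondegenerate q.

Lemma radical_isotropic_eq0 w : in_radical q w -> q w = 0 -> w = 0.
Proof.
case: hnd => [rad0 | [[v [_ [_ rad_line]]] [w0 [rad_w0 qw0]]]] rad_w qw.
  exact: rad0.
have [c0 def_w0] := rad_line _ rad_w0.
have qv : q v != 0 by apply: contraNneq qw0 => qv0; rewrite def_w0 quadZ qv0 mulr0.
have [c def_w] := rad_line _ rad_w.
move/eqP: qw; rewrite def_w quadZ mulf_eq0 (negbTE qv) orbF sqrf_eq0 => /eqP ->.
by rewrite scale0r.
Qed.

Lemma eq_polar_quad u v :
  (forall x, polar q u x = polar q v x) -> q u = q v -> u = v.
Proof.
move=> polar_uv quv; apply/eqP; rewrite -subr_eq0; apply/eqP.
apply: radical_isotropic_eq0 => [x|]; first by rewrite polarDl polarNl polar_uv subrr.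
by rewrite quadD quadN polarNr polar_uv polarxx quv; ring.
Qed.

End QuadraticForm.

Lemma eq_sub_eq (R : zmodType) (u v x y : R) : u = v -> x - y = u - v -> x = y.
Proof. by move=> -> /eqP; rewrite subrr subr_eq0 => /eqP. Qed.

Section CompositionAlgebra.
Variables (F : fieldType) (V : lmodType F) (m : V -> V -> V) (e : V) (n : V -> F).
Hypotheses (hm : bilinear_mul m) (he : is_unit_elt m e) (hq : quadratic_form n).
Hypothesis hmul : forall a b, n (m a b) = n a * n b.

Lemma polar_mull a b c : polar n (m a b) (m a c) = n a * polar n b c.
Proof. by rewrite {1}/polar -(bmulDr hm) !hmul /polar; ring. Qed.

Lemma polar_mul4 a b c d :
  polar n (m a b) (m c d) + polar n (m a d) (m c b) = polar n a c * polar n b d.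
Proof.
have := polar_mull (a + c) b d.
rewrite !(bmulDl hm) !(polarDl hq) !(polarDr hq) !polar_mull quadD (polarC _ (m c b)) => H.
by apply: eq_sub_eq H _; ring.
Qed.

Lemma anisotropic_mul_eq0 a b : anisotropic n -> m a b = 0 -> (a == 0) || (b == 0).
Proof.
move=> aniso ab0; apply: contraT; rewrite negb_or => /andP[a0 b0].
by have := mulf_neq0 (aniso _ a0) (aniso _ b0); rewrite -hmul ab0 (quad0 hq) ?eqxx.
Qed.

Lemma anisotropic_reversible : anisotropic n -> reversible m.
Proof.
move=> aniso a b /(anisotropic_mul_eq0 aniso)/orP[]/eqP->.
  exact: bmul0r.
exact: bmul0l.
Qed.

Hypothesis hnd : Defs.nondegenerate n.

Lemma norm_unit : e != 0 -> n e = 1.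
Proof.
move=> e0; have nee : n e = n e * n e by rewrite -hmul (he e).1.
have [ne0 | ne_neq0] := eqVneq (n e) 0; last by apply: (mulfI ne_neq0); rewrite mulr1 -nee.
have n0 x : n x = 0 by rewrite -(he x).2 hmul ne0 mulr0.
case/eqP: e0; apply: (radical_isotropic_eq0 hq hnd _ (n0 e)) => y.
by rewrite /polar !n0 !subr0.
Qed.

Lemma exists_isotropic_trace1 : isotropic n -> exists f, n f = 0 /\ polar n f e = 1.
Proof.
case=> x [x0 nx]; suff [z [nz tz]] : exists z, n z = 0 /\ polar n z e != 0.
  exists ((polar n z e)^-1 *: z); split; first by rewrite (quadZ hq) nz mulr0.
  by rewrite (polarZl hq) mulVf.
have [tx0 | ] := eqVneq (polar n x e) 0; last by exists x.
have /not_all_ex_not[y /eqP pxy] : ~ in_radical n x.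
  by move=> rad_x; case/eqP: x0; exact: radical_isotropic_eq0 hq hnd _ rad_x nx.
exists (m x y); split; first by rewrite hmul nx mul0r.
have := polar_mul4 x y e e; rewrite (he e).1 (he x).2 (he y).1 tx0 mul0r => /eqP.
by rewrite addr_eq0 => /eqP ->; rewrite oppr_eq0.
Qed.

Hypothesis ne1 : n e = 1.

Lemma mulxx a : m a a = polar n a e *: a - n a *: e.
Proof.
apply: (eq_polar_quad hq hnd) => [x|]; last first.
  rewrite hmul quadD (quadN hq) !(quadZ hq) (polarNr hq) !(polarZl hq) (polarZr hq).
  by rewrite ne1; ring.
have := polar_mul4 a a e x; rewrite (he x).1 (he a).1.
have := polar_mull a x e; rewrite (he a).2 => -> H.
rewrite (polarDl hq) (polarNl hq) !(polarZl hq) (polarC _ e x).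
by apply: eq_sub_eq H _; ring.
Qed.

Lemma mul_add_mulC a b :
  m a b + m b a = polar n a e *: b + polar n b e *: a - polar n a b *: e.
Proof.
have expand_sq : m (a + b) (a + b) = m a a + m b b + (m a b + m b a).
  by rewrite !(bmulDl hm, bmulDr hm) [m b a + _]addrC addrACA.
have expand_quad : polar n (a + b) e *: (a + b) - n (a + b) *: e
    = polar n a e *: a - n a *: e + (polar n b e *: b - n b *: e)
      + (polar n a e *: b + polar n b e *: a - polar n a b *: e).
  by rewrite (polarDl hq) quadD scalerDr; lincomb3_ring a b e.
by move: (mulxx (a + b)); rewrite expand_sq expand_quad -(mulxx a) -(mulxx b) => /addrI.
Qed.

Definition conjugate a := polar n a e *: e - a.

Lemma norm_conjugate a : n (conjugate a) = n a.
Proof.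
rewrite /conjugate quadD (quadN hq) (quadZ hq) (polarNr hq) (polarZl hq).
by rewrite ne1 polarC; ring.
Qed.

Lemma conjugate_mulK a b : m (conjugate a) (m a b) = n a *: b.
Proof.
apply: (eq_polar_quad hq hnd) => [x|]; last by rewrite !hmul norm_conjugate (quadZ hq); ring.
have := polar_mul4 a (m a b) e x; rewrite (he x).1 (he (m a b)).1 polar_mull (polarC _ x b).
move=> H; rewrite /conjugate (bmulBl hm) (bmulZl hm) (he _).1.
rewrite (polarDl hq) (polarNl hq) !(polarZl hq).
by apply: eq_sub_eq (esym H) _; ring.
Qed.

End CompositionAlgebra.

Section SplitCompositionAlgebra.
Variables (F : fieldType) (V : lmodType F) (m : V -> V -> V) (e : V) (n : V -> F).
Hypotheses (hm : bilinear_mul m) (he : is_unit_elt m e) (hq : quadratic_form n).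
Hypotheses (hmul : forall a b, n (m a b) = n a * n b) (hnd : Defs.nondegenerate n).
Hypothesis ne1 : n e = 1.

Lemma mul_isotropic_trace1 u b : n u = 0 -> polar n u e = 1 -> m (e - u) (m u b) = 0.
Proof.
move=> nu tu; have := conjugate_mulK hm he hq hmul hnd ne1 u b.
by rewrite /conjugate tu scale1r nu scale0r.
Qed.

Variable f : V.
Hypotheses (nf : n f = 0) (tf : polar n f e = 1).

Lemma norm_unit_sub : n (e - f) = 0.
Proof. by rewrite quadD (quadN hq) (polarNr hq) (polarC _ e f) tf nf ne1; ring. Qed.

Lemma trace_unit_sub : polar n (e - f) e = 1.
Proof. by rewrite (polarDl hq) (polarNl hq) (polarxx hq) ne1 tf; ring. Qed.

Lemma mul_isotropic_sub b : m f (m (e - f) b) = 0.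
Proof. by rewrite -{1}(subKr e f) mul_isotropic_trace1 ?norm_unit_sub ?trace_unit_sub. Qed.

Lemma mul_isotropic_idem b : m f (m f b) = m f b.
Proof.
apply/esym/subr0_eq.
by rewrite -(bmulBr hm) -{1}((he b).1) -(bmulBl hm) mul_isotropic_sub.
Qed.

Hypothesis hrev : reversible m.

Lemma reversible_mul_isotropicC b : m b f = m f b.
Proof.
have /hrev : m (e - f) (m f b) = 0 by rewrite mul_isotropic_trace1.
rewrite (bmulBr hm) (he _).2 => /subr0_eq ->.
have /hrev := mul_isotropic_sub b.
by rewrite !(bmulBl hm) (he b).1 => /subr0_eq.
Qed.

Lemma reversible_mul_isotropic_double x :
  m f x + m f x = x + (polar n x e *: f - polar n f x *: e).
Proof.
have := mul_add_mulC hm he hq hmul hnd ne1 f x.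
by rewrite tf scale1r reversible_mul_isotropicC addrA.
Qed.

Lemma reversible_span_isotropic b : exists c d, b = c *: e + d *: f.
Proof.
have := reversible_mul_isotropic_double (m f b); rewrite mul_isotropic_idem => /addrI.
set tfb := polar n (m f b) e; set pfb := polar n f (m f b) => def_fb.
exists (polar n f b - 2 * pfb), (2 * tfb - polar n b e).
rewrite -[LHS](addrK (polar n b e *: f - polar n f b *: e)).
by rewrite -reversible_mul_isotropic_double def_fb; lincomb3_ring e f e.
Qed.

End SplitCompositionAlgebra.

Lemma reversible_split_dim_le2 (F : fieldType) (V : lmodType F) (m : V -> V -> V)
    (e : V) (n : V -> F) :
  hurwitz m e n -> isotropic n -> reversible m -> dim_le V 2.
Proof.
case=> hm he hq hnd hmul iso rev; have [x [x0 _]] := iso.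
have ne1 := norm_unit he hq hmul hnd (unit_elt_neq0 hm he x0).
have [f [nf tf]] := exists_isotropic_trace1 hm he hq hmul hnd iso.
apply/dim_le2P; exists e, f.
exact: reversible_span_isotropic hm he hq hmul hnd ne1 f nf tf rev.
Qed.

Theorem proposition4p2 (F : fieldType) (V : lmodType F) (m : V -> V -> V) (e : V)
    (n : V -> F) :
  hurwitz m e n ->
  (anisotropic n -> reversible m) /\
  (isotropic n -> (reversible m <-> dim_le V 2)).
Proof.
move=> hH; case: (hH) => hm he hq hnd hmul.
split; first exact: anisotropic_reversible.
move=> iso; split; first exact: reversible_split_dim_le2 hH iso.
have [x [x0 _]] := iso.
by move=> dim a b ab0; rewrite (dim_le2_mulC hm he (unit_elt_neq0 hm he x0) dim) ab0.
Qed.
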